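(* Let $F\ge1$ and $n_1,\dots,n_F$ be positive integers with $n_1\ge2$, not $(F,n_1)=(1,2)$, and let $p_a$, $r^{(k)}$, $r$ be as in the context. Label the vertices of a regular $r$-gon by $0,1,\dots,r-1$ (modulo $r$) clockwise, and assign to the vertex $t\,r^{(2)} \bmod r$ the time-ordered index $t\in\{0,\dots,r-1\}$. Then for every $a=1,\dots,F$: if the vertex $k$ has time-ordered index $t$, then the vertex $k+r^{(a+1)}$ (mod $r$) has time-ordered index $t+(-1)^{a-1}p_a$ (mod $r$).
   Context: For $1\le k\le a\le F$, let $p^{(k)}_a/q^{(k)}_a$ (coprime positive integers) equal the continued fraction $[n_a,\dots,n_k]:=1/(n_a+1/(n_{a-1}+\cdots+1/n_k))$, $[n_k]=1/n_k$; write $p_a=p^{(1)}_a$. Set $r^{(k)}=p^{(k)}_F+q^{(k)}_F$ for $1\le k\le F$, $r^{(F+1)}=r^{(F+2)}=1$, $r=r^{(1)}$. The integers $r$ and $r^{(2)}$ are coprime, so the time-ordered index is a well-defined bijection between vertices and $\mathbb{Z}/r\mathbb{Z}$. *)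

From HB Require Import structures.
From mathcomp Require Import all_boot all_order all_algebra.
Set Implicit Arguments. Unset Strict Implicit. Unset Printing Implicit Defensive.
Import Order.TTheory GRing.Theory Num.Theory.
Local Open Scope ring_scope.

(* The sequence n_1, n_2, ... is a function n : nat -> nat (only n 1 .. n F matter). *)

(* cf_aux n k d = [n_{k+d}, ..., n_k] as a rational number, where
   [n_k] = 1/n_k and [n_a,...,n_k] = 1/(n_a + [n_{a-1},...,n_k]). *)
Fixpoint cf_aux (n : nat -> nat) (k d : nat) : rat :=
  match d with
  | O => ((n k)%:R)^-1
  | d'.+1 => ((n (k + d)%N)%:R + cf_aux n k d')^-1
  end.

Definition cf (n : nat -> nat) (k a : nat) : rat := cf_aux n k (a - k).

Definition pk (n : nat -> nat) (k a : nat) : int := numq (cf n k a).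
Definition qk (n : nat -> nat) (k a : nat) : int := denq (cf n k a).

Definition p (n : nat -> nat) (a : nat) : int := pk n 1 a.

Definition rk (n : nat -> nat) (F k : nat) : int :=
  if (k <= F)%N then pk n k F + qk n k F else 1.

Definition r (n : nat -> nat) (F : nat) : int := rk n F 1.

Definition vertex_of_index (n : nat -> nat) (F : nat) (t : int) : int :=
  ((t * rk n F 2) %% r n F)%Z.

Definition has_index (n : nat -> nat) (F : nat) (v t : int) : Prop :=
  v = vertex_of_index n F t.

From mathcomp Require Import all_boot all_order all_algebra.
From mathcomp Require Import ring zify.
Import Order.TTheory GRing.Theory Num.Theory.
Local Open Scope ring_scope.

(* Both p_a and r^(k) are continuants.  Writing K for the continuant,
   [n_a, ..., n_k] = K(n_k, ..., n_{a-1}) / K(n_k, ..., n_a) in lowest terms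
   (consecutive continuants are coprime by the determinant identity), so
   p_a = K(n_1, ..., n_{a-1}) and, K being linear in its last entry,
   r^(k) = K(n_k, ..., n_{F-1}, n_F + 1).  As the vertex of index t is
   t r^(2) mod r, the claim is r^(a+1) = (-1)^(a-1) p_a r^(2) mod r.  Splitting
   r = K(n_1, ..., n_F + 1) and r^(2) after the entry n_a, eliminating the
   tail K(n_{a+2}, ..., n_F + 1) and using the determinant identity gives
   r^(a+1) = (-1)^(a-1) (p_a r^(2) - K(n_2, ..., n_{a-1}) r). *)

(* [continuant f i l.+1] is the continuant K(f i, ..., f (i + l - 1)) of the
   l entries starting at index i, and [continuant f i 0] = 0. *)
Fixpoint continuant (f : nat -> int) (i l : nat) : int :=
  match l with
  | 0 => 0
  | l1.+1 => if l1 is l'.+1 then f (i + l')%N * continuant f i l1 + continuant f i l'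
             else 1
  end.

Section Continuants.

Variable f : nat -> int.

Lemma continuantSS i l :
  continuant f i l.+2 = f (i + l)%N * continuant f i l.+1 + continuant f i l.
Proof. by []. Qed.

Lemma continuant_split i j l :
  continuant f i (j + l).+1 =
  continuant f i j.+1 * continuant f (i + j) l.+1
  + continuant f i j * continuant f (i + j).+1 l.
Proof.
elim/ltn_ind: l => -[|[|l]] IH.
- by rewrite addn0 mulr1 mulr0 addr0.
- rewrite addn1 continuantSS [continuant f (i + j) 2]continuantSS addn0 /=.
  by rewrite mulr1 addr0 mulrC mulr1.
rewrite addnS continuantSS (IH l.+1) // (addnS j l) (IH l) //.
rewrite [continuant f (i + j) l.+3]continuantSS.
rewrite [continuant f (i + j).+1 l.+2]continuantSS.
rewrite !addnS addSn addnA; ring.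
Qed.

Lemma continuant_det i l :
  continuant f i l.+2 * continuant f i.+1 l
  - continuant f i l.+1 * continuant f i.+1 l.+1 = (-1) ^+ l.+1.
Proof.
elim: l => [|l IH]; first by rewrite /= mulr0 mulr1 sub0r expr1.
rewrite continuantSS [continuant f i.+1 l.+2]continuantSS addSnnS exprS -IH; ring.
Qed.

Lemma continuant_coprime i l :
  coprimez (continuant f i l.+1) (continuant f i l.+2).
Proof.
apply/coprimezP; exists (- ((-1) ^+ l.+1 * continuant f i.+1 l.+1),
                         (-1) ^+ l.+1 * continuant f i.+1 l); cbn [fst snd].
transitivity ((-1) ^+ l.+1 * ((-1) ^+ l.+1 : int)); last by rewrite -expr2 sqrr_sign.
rewrite -[X in _ = _ * X](continuant_det i l); ring.
Qed.

Lemma continuant_gt0 i l :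
  (forall j, 0 <= f j) -> 0 < f i -> 0 < continuant f i l.+1.
Proof.
move=> f_ge0 fi_gt0; elim/ltn_ind: l => -[|[|l]] IH //.
  by rewrite continuantSS addn0 mulr1 addr0.
by rewrite continuantSS ltr_wpDl ?IH // mulr_ge0 ?f_ge0 // ltW ?IH.
Qed.

Lemma eq_continuant g i l :
  (forall j, (j.+1 < i + l)%N -> f j = g j) -> continuant f i l = continuant g i l.
Proof.
elim/ltn_ind: l => -[|[|l]] IH eq_fg //.
rewrite !continuantSS eq_fg; last by lia.
by rewrite !IH // => j lt_j; apply: eq_fg; lia.
Qed.

Lemma continuant_tail i b l :
  continuant f (i + b).+1 l.+1 =
  (-1) ^+ b * (continuant f i b.+1 * continuant f i.+1 (b + l).+1
               - continuant f i.+1 b * continuant f i (b.+1 + l).+1).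
Proof.
rewrite (continuant_split i.+1 b l) (continuant_split i b.+1 l) addnS addSn.
transitivity ((-1) ^+ b * - (-1) ^+ b.+1 * continuant f (i + b).+1 l.+1).
  by rewrite exprS mulN1r opprK -expr2 sqrr_sign mul1r.
rewrite -(continuant_det i b); ring.
Qed.

Lemma continuant_tail_mod i b l :
  (continuant f (i + b).+1 l.+1
   = (-1) ^+ b * continuant f i b.+1 * continuant f i.+1 (b + l).+1
     %[mod continuant f i (b.+1 + l).+1])%Z.
Proof.
rewrite continuant_tail.
have -> : forall s a c t d : int, s * (a * t - c * d) = - (s * c) * d + s * a * t.
  by move=> *; ring.
by rewrite modzMDl.
Qed.

End Continuants.

Section ContinuedFractions.

Variable n : nat -> nat.

Let nz (j : nat) : int := (n j)%:Z.

Lemma cf_aux_continuant k d : (0 < n k)%N ->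
  cf_aux n k d = (continuant nz k d.+1)%:~R / (continuant nz k d.+2)%:~R.
Proof.
move=> nk_gt0.
have nz_ge0 j : 0 <= nz j by [].
have nzk_gt0 : 0 < nz k by rewrite ltz_nat.
elim: d => [|d IH]; first by rewrite /= addn0 mulr1 addr0 div1r.
rewrite /= IH -/(continuant nz k d.+2) -/(continuant nz k d.+1).
have := continuant_gt0 nz k d nz_ge0 nzk_gt0.
have := continuant_gt0 nz k d.+1 nz_ge0 nzk_gt0.
move: (continuant nz k d.+1) (continuant nz k d.+2) => c0 c1 c1_gt0 c0_gt0.
have den_gt0 : 0 < (n (k + d.+1))%:R * c1%:~R + c0%:~R :> rat.
  by rewrite ltr_wpDl ?mulr_ge0 ?ltr0z // ltW ?ltr0z.
rewrite rmorphD rmorphM /= -[(nz _)%:~R]/(n _)%:R; field.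
by rewrite !gt_eqF ?ltr0z.
Qed.

Lemma pk_qk_continuant k a : (0 < n k)%N ->
  pk n k a = continuant nz k (a - k).+1 /\ qk n k a = continuant nz k (a - k).+2.
Proof.
move=> nk_gt0; have nzk_gt0 : 0 < nz k by rewrite ltz_nat.
have c_gt0 := continuant_gt0 nz k (a - k).+1 (fun j => le0z_nat (n j)) nzk_gt0.
have cop := continuant_coprime nz k (a - k).
rewrite /pk /qk /cf cf_aux_continuant //; split.
  by rewrite coprimeq_num // gtr0_sg // mul1r.
by rewrite coprimeq_den // gt_eqF // gtr0_norm.
Qed.

Definition lastS (F j : nat) : int := (n j + (j == F))%N%:Z.

Lemma continuant_lastS F i l : (i + l <= F.+1)%N ->
  continuant (lastS F) i l = continuant nz i l.
Proof.
move=> il_le; apply: eq_continuant => j lt_j.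
rewrite /lastS; have /negbTE -> : j != F by apply/eqP; lia.
by rewrite addn0.
Qed.

Lemma rk_continuant F k :
  (forall i, (1 <= i <= F)%N -> (0 < n i)%N) -> (1 <= k <= F.+1)%N ->
  rk n F k = continuant (lastS F) k (F.+2 - k).
Proof.
move=> n_gt0 /andP[k_ge1 k_le]; rewrite /rk; case: leqP => [k_leF|k_gtF]; last first.
  have -> : k = F.+1 by lia.
  by rewrite subSn // subnn.
have nk_gt0 : (0 < n k)%N by apply: n_gt0; lia.
have [-> ->] := pk_qk_continuant k F nk_gt0.
have -> : (F.+2 - k = (F - k).+2)%N by lia.
rewrite !continuantSS !continuant_lastS; try lia.
have -> : (k + (F - k) = F)%N by lia.
by rewrite /lastS eqxx addn1 intS; ring.
Qed.

Lemma p_continuant F a : (0 < n 1)%N -> (1 <= a <= F)%N ->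
  p n a = continuant (lastS F) 1 a.
Proof.
move=> n1_gt0 a_range.
rewrite /p (pk_qk_continuant 1 a n1_gt0).1 continuant_lastS; last by lia.
by congr continuant; lia.
Qed.

End ContinuedFractions.

Theorem proposition5p29 (F : nat) (n : nat -> nat) :
  (1 <= F)%N ->
  (forall i, (1 <= i <= F)%N -> (0 < n i)%N) ->
  (2 <= n 1%N)%N ->
  ~ (F = 1%N /\ n 1%N = 2%N) ->
  forall a : nat, (1 <= a <= F)%N ->
  forall (k t : int), 0 <= k < r n F -> 0 <= t < r n F ->
    has_index n F k t ->
    has_index n F (((k + rk n F a.+1) %% r n F)%Z)
                  (((t + (-1) ^+ (a.-1) * p n a) %% r n F)%Z).
Proof.
move=> F_ge1 n_gt0 _ _ a a_range k t _ _ ->.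
have n1_gt0 : (0 < n 1)%N by apply: n_gt0; lia.
rewrite /has_index /vertex_of_index /r (p_continuant n F a n1_gt0 a_range).
rewrite !(rk_continuant n F _ n_gt0); try lia.
have [b a_eq] : exists b, a = b.+1 by exists a.-1; lia.
have [l F_eq] : exists l, F = (b.+1 + l)%N by exists (F - a)%N; lia.
have -> : (F.+2 - 1 = (b.+1 + l).+1)%N by lia.
have -> : (F.+2 - 2 = (b + l).+1)%N by lia.
have -> : (F.+2 - a.+1 = l.+1)%N by lia.
rewrite a_eq -[b.+2]/(1 + b).+1 modzDml modzMml.
by rewrite -modzDmr continuant_tail_mod modzDmr; congr modz; ring.
Qed.
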